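(* Let $H\in\mathcal K_r(n)$, and let $A,B$ be hyperedges of $H$ with $|A|\le n/2$ and $|B|\le n/2$. Then $A\cap B$ is a hyperedge of $H$.
   Context: $\mathcal K_r(n)$ is the class of hypergraphs on vertex set $V=[n]$ (identified with their hyperedge sets $\mathcal E$) satisfying: (R0) every $X\subseteq V$ with $|X|\le r$ is in $\mathcal E$; (R1) $A\in\mathcal E\Rightarrow V\setminus A\in\mathcal E$; (R2) $A,B\in\mathcal E$ and $|A\cap B|\ge r\Rightarrow A\cup B\in\mathcal E$. *)

From mathcomp Require Import all_boot.
Set Implicit Arguments. Unset Strict Implicit. Unset Printing Implicit Defensive.

(* A hypergraph on V = [n], represented as 'I_n, identified with its set of
   hyperedges E : {set {set 'I_n}}. *)
Definition in_K (r n : nat) (E : {set {set 'I_n}}) : Prop :=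
  [/\ forall X : {set 'I_n}, #|X| <= r -> X \in E,
      forall A, A \in E -> ~: A \in E
    & forall A B, A \in E -> B \in E -> r <= #|A :&: B| -> A :|: B \in E].
Arguments in_K r n E : clear implicits.

From mathcomp Require Import all_boot.
From mathcomp Require Import zify.

(* If |A ∩ B| <= r, (R0) applies. Otherwise the complements of two sets of
   size at most n/2 meet in at least |A ∩ B| > r points, so (R1) and (R2) put
   ~A ∪ ~B in H, and its complement A ∩ B too. *)

Lemma card_setI_le_setCI (T : finType) (A B : {set T}) :
  2 * #|A| <= #|T| -> 2 * #|B| <= #|T| -> #|A :&: B| <= #|~: A :&: ~: B|.
Proof.
move=> cA cB; rewrite -setCU.
have := cardsC (A :|: B); have := cardsUI A B; lia.
Qed.

Lemma in_K_setI_of_complements r n (E : {set {set 'I_n}}) (A B : {set 'I_n}) :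
  in_K r n E -> A \in E -> B \in E -> r <= #|~: A :&: ~: B| -> A :&: B \in E.
Proof.
move=> [_ R1 R2] hA hB cAB.
have hCU : ~: A :|: ~: B \in E by apply: R2 => //; exact: R1.
by rewrite -[A :&: B]setCK setCI; exact: R1.
Qed.

(* |A| <= n/2 is written 2 * |A| <= n (exact, no rounding). *)
Theorem mainTheorem9 (r n : nat) (E : {set {set 'I_n}}) (A B : {set 'I_n}) :
  in_K r n E -> A \in E -> B \in E ->
  2 * #|A| <= n -> 2 * #|B| <= n ->
  A :&: B \in E.
Proof.
move=> HK hA hB cA cB.
have [small | large] := leqP #|A :&: B| r; first by case: HK => R0 _ _; exact: R0.
apply: in_K_setI_of_complements HK hA hB _.
apply: leq_trans (ltnW large) _.
by apply: card_setI_le_setCI; rewrite card_ord.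
Qed.
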